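(* Let $q$ be a prime and $k\in\mathbb{N}$. There is a positive constant $m'_{q,k}$ depending only on $q$ and $k$ such that for every $N\in\mathbb{N}$, the number of $k$-element subsets of $[N]^{\times}=\{\pm p_1^{e_1}p_2^{e_2}\cdots p_N^{e_N}: 0\le e_1,\ldots,e_N\le N\}$ that contain at least one perfect $q^{th}$ power is at most $m'_{q,k}\frac{N^{Nk}}{q^N}$.
   Context: $p_1<p_2<\cdots$ denote the primes in increasing order. A perfect $q^{th}$ power is an integer of the form $m^q$ with $m\in\mathbb{Z}$. *)

From mathcomp Require Import all_boot all_order all_algebra.
Set Implicit Arguments. Unset Strict Implicit. Unset Printing Implicit Defensive.
Import Order.TTheory GRing.Theory Num.Theory.

Lemma exists_prime_above (m : nat) : exists p, (m < p) && prime p.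
Proof. by have [p Hp Pp] := prime_above m; exists p; rewrite Hp Pp. Qed.

Definition next_prime (m : nat) : nat := ex_minn (exists_prime_above m).

(* nth_prime i = p_{i+1} : nth_prime 0 = 2, nth_prime 1 = 3, ... *)
Definition nth_prime (i : nat) : nat := iter i next_prime 2.

(* The element  s * p_1^{e_1} ... p_N^{e_N}  (s = -1 if b, else +1),
   with exponent vector e : 'I_N -> 'I_(N+1) (so 0 <= e_i <= N). *)
Definition elt_val (N : nat) (x : bool * {ffun 'I_N -> 'I_N.+1}) : int :=
  ((-1) ^+ x.1 * (\prod_(i < N) (nth_prime i) ^ (x.2 i : nat))%:Z)%R.

Definition signedbox (N : nat) : seq int :=
  undup [seq elt_val x | x : bool * {ffun 'I_N -> 'I_N.+1}].

Definition perfect_pow (q : nat) (x : int) : Prop := exists m : int, x = (m ^+ q)%R.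

From mathcomp Require Import all_boot all_order all_algebra.
From mathcomp Require Import zify.
Import Order.TTheory GRing.Theory Num.Theory.

(* A signed product of prime powers +- p_1^e_1 ... p_N^e_N is a perfect q-th
   power only if q divides every e_i, so [N]^x contains at most 2 (N/q + 1)^N
   perfect q-th powers.  A k-subset containing one of them is the image of that
   power together with a (k-1)-tuple of elements of [N]^x, a set with at most
   2 (N+1)^N elements.  Both counts are compared with N^N via
   (N + q)^N <= 3^q N^N, a form of (1 + q/N)^N <= e^q. *)

Lemma leq_expn2r m n e : m <= n -> m ^ e <= n ^ e.
Proof. by case: e => // e le_mn; rewrite leq_exp2r. Qed.

(* (1 + 1/n)^j <= 1 + j/n + (j/n)^2 for j <= n, with denominators cleared. *)
Lemma leq_succ_expn_sqr n j :
  j <= n -> n.+1 ^ j * n ^ 2 <= n ^ j * (n ^ 2 + j * n + j ^ 2).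
Proof.
elim: j => [|j IHj] lt_jn; first by rewrite !expn0 !mul1n; lia.
have step : n.+1 * (n ^ 2 + j * n + j ^ 2) <= n * (n ^ 2 + j.+1 * n + j.+1 ^ 2).
  by rewrite !expnS !expn0; nia.
rewrite [n.+1 ^ _]expnS [n ^ j.+1]expnS -mulnA.
apply: leq_trans (leq_mul (leqnn _) (IHj (ltnW lt_jn))) _.
by rewrite mulnCA [n * n ^ j]mulnC -mulnA leq_mul2l step orbT.
Qed.

Lemma leq_succ_expn n : n.+1 ^ n <= 3 * n ^ n.
Proof.
case: n => [|n] //; have := @leq_succ_expn_sqr n.+1 n.+1 (leqnn _).
have -> : n.+1 ^ 2 + n.+1 * n.+1 + n.+1 ^ 2 = 3 * n.+1 ^ 2 by rewrite !expnS expn0; lia.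
by rewrite mulnCA mulnA leq_pmul2r ?expn_gt0.
Qed.

Lemma leq_succ_expn_le n m : n <= m -> m.+1 ^ n <= 3 * m ^ n.
Proof.
case: m => [|m le_nm]; first by rewrite leqn0 => /eqP ->.
rewrite -(leq_pmul2r (expn_gt0 m.+1 (m.+1 - n))) -mulnA -!expnD subnKC //.
apply: leq_trans (leq_succ_expn m.+1).
have -> : m.+2 ^ m.+1 = m.+2 ^ n * m.+2 ^ (m.+1 - n) by rewrite -expnD subnKC.
by rewrite leq_mul2l leq_expn2r ?orbT.
Qed.

Lemma leq_addn_expn n q : (n + q) ^ n <= 3 ^ q * n ^ n.
Proof.
elim: q => [|q IHq]; first by rewrite addn0 mul1n.
rewrite addnS expnS -mulnA.
apply: leq_trans (@leq_succ_expn_le n (n + q) (leq_addr q n)) _.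
by rewrite leq_mul2l IHq.
Qed.

Lemma next_primeP m : m < next_prime m /\ prime (next_prime m).
Proof. by rewrite /next_prime; case: ex_minnP => p /andP[]. Qed.

Lemma prime_nth_prime i : prime (nth_prime i).
Proof. by case: i => [|i] //; have [] := next_primeP (nth_prime i). Qed.

Lemma nth_prime_inj : injective nth_prime.
Proof.
apply/incn_inj/leq_mono/(homo_ltn ltn_trans) => i.
by have [] := next_primeP (nth_prime i).
Qed.

Lemma logn_prod_pfactor (I : finType) (p e : I -> nat) (j : I) :
  (forall i, prime (p i)) -> injective p ->
  logn (p j) (\prod_i p i ^ e i) = e j.
Proof.
move=> p_pr p_inj.
have coprime_rest : coprime (p j) (\prod_(i | i != j) p i ^ e i).
  apply: (big_ind (coprime (p j))) => [|x y cx cy|i neq_ij]; first exact: coprimen1.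
    by rewrite coprimeMr cx.
  by rewrite coprimeXr // prime_coprime // dvdn_prime2 // (inj_eq p_inj) eq_sym.
have pe_gt0 i : 0 < p i ^ e i by rewrite expn_gt0 prime_gt0.
rewrite (bigD1 j) //= lognM //; last exact: prodn_gt0.
by rewrite pfactorK // (logn_coprime coprime_rest) addn0.
Qed.

Lemma perfect_pow_elt_val_dvd q N (x : bool * {ffun 'I_N -> 'I_N.+1}) :
  perfect_pow q (elt_val x) -> forall i, q %| x.2 i.
Proof.
case: x => s e [m elt_m] i /=.
have prod_m : \prod_(j < N) nth_prime j ^ e j = (`|m| ^ q)%N.
  by have := congr1 absz elt_m; rewrite abszM !abszX /= exp1n mul1n.
have primes_inj : injective (fun j : 'I_N => nth_prime j).
  by move=> a b /nth_prime_inj/val_inj.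
rewrite -(@logn_prod_pfactor _ _ (fun j => e j) i prime_nth_prime primes_inj).
by rewrite prod_m lognX dvdn_mulr.
Qed.

(* [inord] is exact here since q * (N %/ q) <= N. *)
Definition elt_val_scaled (q N : nat) (x : bool * {ffun 'I_N -> 'I_(N %/ q).+1}) : int :=
  elt_val (x.1, [ffun i => inord (q * x.2 i)]).

Lemma elt_val_scaled_codom q N (x : bool * {ffun 'I_N -> 'I_N.+1}) :
  0 < q -> (forall i, q %| x.2 i) -> elt_val x \in codom (elt_val_scaled q N).
Proof.
case: x => s e q_gt0 q_dvd /=; apply/codomP.
exists (s, [ffun i => inord (e i %/ q)]); rewrite /elt_val_scaled /=.
congr (elt_val (_, _)); apply/ffunP => i; rewrite !ffunE; apply: val_inj => /=.
have lt_quot : e i %/ q < (N %/ q).+1 by rewrite ltnS leq_div2r // -ltnS.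
by rewrite (inordK lt_quot) mulnC divnK ?inordK // (q_dvd i).
Qed.

Lemma signedbox_perfect_pow q N y : 0 < q ->
  y \in signedbox N -> perfect_pow q y -> y \in codom (elt_val_scaled q N).
Proof.
rewrite mem_undup => q_gt0 /mapP[x _ ->] pow_x.
exact/elt_val_scaled_codom/perfect_pow_elt_val_dvd.
Qed.

Lemma size_signedbox N : size (signedbox N) <= 6 * N ^ N.
Proof.
apply: leq_trans (size_undup _) _.
rewrite size_map -cardE card_prod card_bool card_ffun !card_ord.
by rewrite -[6]/(2 * 3) -mulnA leq_mul2l leq_succ_expn.
Qed.

Lemma card_nth_mem_le {T : eqType} (x0 : T) (s r : seq T) :
  uniq s -> #|[set i : 'I_(size s) | nth x0 s i \in r]| <= size r.
Proof.
move=> s_uniq; rewrite cardE -(size_map (fun i : 'I_(size s) => nth x0 s i)).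
apply: uniq_leq_size => [|y /mapP[i]]; last by rewrite mem_enum inE => r_i ->.
rewrite map_inj_in_uniq ?enum_uniq // => i j _ _ /eqP.
by rewrite nth_uniq // => /eqP /val_inj.
Qed.

Definition scaled_positions (q N : nat) : {set 'I_(size (signedbox N))} :=
  [set i : 'I_(size (signedbox N)) | nth 0%R (signedbox N) i \in codom (elt_val_scaled q N)].

Lemma perfect_pow_scaled_positions q N (i : 'I_(size (signedbox N))) : 0 < q ->
  perfect_pow q (nth 0%R (signedbox N) i) -> i \in scaled_positions q N.
Proof. by move=> q_gt0 pow_i; rewrite inE signedbox_perfect_pow ?mem_nth. Qed.

Lemma card_scaled_positions q N : #|scaled_positions q N| * q ^ N <= 2 * 3 ^ q * N ^ N.
Proof.
have card_le : #|scaled_positions q N| <= 2 * (N %/ q).+1 ^ N.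
  apply: leq_trans (card_nth_mem_le 0%R _ _ (undup_uniq _)) _.
  by rewrite size_codom card_prod card_bool card_ffun !card_ord.
have quot_le : (N %/ q).+1 * q <= N + q by rewrite mulSn addnC leq_add2r leq_divM.
apply: leq_trans (leq_mul card_le (leqnn _)) _.
rewrite -!mulnA leq_mul2l -expnMn; apply/orP; right.
by apply: leq_trans (leq_addn_expn N q); apply: leq_expn2r.
Qed.

Lemma card_meeting_ksets_le {T : finType} (P : {set T}) k :
  #|[set A : {set T} | (#|A| == k.+1) && ~~ [disjoint A & P]]| <= #|P| * #|T| ^ k.
Proof.
pose extend (x : T * k.-tuple T) := x.1 |: [set y in x.2].
apply: leq_trans (_ : #|extend @: setX P [set: k.-tuple T]| <= _); last first.
  by apply: leq_trans (leq_imset_card _ _) _; rewrite cardsX cardsT card_tuple.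
apply/subset_leq_card/subsetP => A; rewrite inE -setI_eq0 => /andP[/eqP card_A].
case/set0Pn => i /setIP[iA iP].
have size_rest : size (enum (A :\ i)) == k.
  by move: card_A; rewrite -cardE (cardsD1 i A) iA add1n => -[->].
apply/imsetP; exists (i, Tuple size_rest); first by rewrite in_setX iP in_setT.
by rewrite /extend /= set_enum setD1K.
Qed.

Theorem lemma2 (q k : nat) (hq : prime q) :
  exists m : rat, (0 < m)%R /\
    forall (N : nat) (F : {set {set 'I_(size (signedbox N))}}),
      (forall A, A \in F <->
         (#|A| = k /\ exists i, i \in A /\ perfect_pow q (nth 0%R (signedbox N) i))) ->
      ((#|F|)%:R <= m * (N ^ (N * k))%:R / (q ^ N)%:R :> rat)%R.
Proof.
have q_gt0 := prime_gt0 hq.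
case: k => [|k].
  exists 1%R; split=> // N F memF.
  have -> : F = set0.
    apply/setP => A; rewrite inE; apply/negbTE/negP => /memF[/eqP].
    by rewrite cards_eq0 => /eqP-> [i []]; rewrite inE.
  by rewrite cards0 mul1r divr_ge0 ?ler0n.
exists ((2 * 3 ^ q * 6 ^ k)%:R)%R; split=> [|N F memF].
  by rewrite ltr0n !muln_gt0 !expn_gt0.
set P := scaled_positions q N.
have F_sub : F \subset [set A : {set _} | (#|A| == k.+1) && ~~ [disjoint A & P]].
  apply/subsetP => A /memF[card_A [i [iA pow_i]]].
  rewrite inE card_A eqxx -setI_eq0; apply/set0Pn; exists i.
  by rewrite inE iA perfect_pow_scaled_positions.
rewrite ler_pdivlMr ?ltr0n ?expn_gt0 ?q_gt0 // -!natrM ler_nat.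
apply: leq_trans (leq_mul (subset_leq_card F_sub) (leqnn _)) _.
apply: leq_trans (leq_mul (card_meeting_ksets_le P k) (leqnn _)) _.
have -> : 2 * 3 ^ q * 6 ^ k * N ^ (N * k.+1) = 2 * 3 ^ q * N ^ N * (6 * N ^ N) ^ k.
  by rewrite mulnS expnD expnMn expnM; nia.
by rewrite card_ord mulnAC leq_mul ?card_scaled_positions // leq_expn2r ?size_signedbox.
Qed.
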